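(* Let $\mathcal{I}$ be a countable nonempty set of database instances, $\mathcal{L}$ a query language, $f$ a set function on subsets of $\mathcal{I}$ with nonnegative real values, and let $p$ be the answer-dependent pricing function $p(\mathbf{Q},E)=f(\overline{\mathcal{S}}_{\mathbf{Q}}(E))$ for $\mathbf{Q}\in B(\mathcal{L})$, $E\in\{\mathbf{Q}(D):D\in\mathcal{I}\}$. The following are equivalent: (1) $p$ has no bundle arbitrage; (2) $f$ is subadditive over every semilattice $\mathcal{S}^{\mathcal{L}}_D$, $D\in\mathcal{I}$.
   Context: A query is a deterministic function on $\mathcal{I}$. A query bundle $\mathbf{Q}=(Q_1,\dots,Q_n)$ is a finite tuple of queries from $\mathcal{L}$, with $\mathbf{Q}(D)=(Q_1(D),\dots,Q_n(D))$; $B(\mathcal{L})$ is the set of all finite query bundles, closed under union (concatenation) $\mathbf{Q}_1,\mathbf{Q}_2$. $p$ has no bundle arbitrage if for every $D\in\mathcal{I}$ and all $\mathbf{Q}_1,\mathbf{Q}_2\in B(\mathcal{L})$, with $\mathbf{Q}=\mathbf{Q}_1,\mathbf{Q}_2$, we have $p(\mathbf{Q},\mathbf{Q}(D))\le p(\mathbf{Q}_1,\mathbf{Q}_1(D))+p(\mathbf{Q}_2,\mathbf{Q}_2(D))$. The conflict set is $\overline{\mathcal{S}}_{\mathbf{Q}}(E)=\{D'\in\mathcal{I}:\mathbf{Q}(D')\neq E\}$. For $D\in\mathcal{I}$, $\mathcal{S}^{\mathcal{L}}_D=\{\overline{\mathcal{S}}_{\mathbf{Q}}(\mathbf{Q}(D)):\mathbf{Q}\in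 B(\mathcal{L})\}$, a join-semilattice under inclusion with join $\cup$. $f$ is subadditive over $\mathcal{S}^{\mathcal{L}}_D$ if $f(A\cup B)\le f(A)+f(B)$ for all $A,B\in\mathcal{S}^{\mathcal{L}}_D$. *)

From Stdlib Require Import Reals List.
Import ListNotations.
Open Scope R_scope.

Definition query (Inst Ans : Type) := Inst -> Ans.

Definition bundle_in {Inst Ans : Type} (L : query Inst Ans -> Prop)
  (Q : list (query Inst Ans)) : Prop := Forall L Q.

Definition eval_bundle {Inst Ans : Type} (Q : list (query Inst Ans)) (D : Inst)
  : list Ans := map (fun q => q D) Q.

Definition conflict_set {Inst Ans : Type} (Q : list (query Inst Ans))
  (E : list Ans) : Inst -> Prop := fun D' => eval_bundle Q D' <> E.

Definition price {Inst Ans : Type} (f : (Inst -> Prop) -> R)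
  (Q : list (query Inst Ans)) (E : list Ans) : R := f (conflict_set Q E).

(* no bundle arbitrage (bundle union = concatenation) *)
Definition no_bundle_arbitrage {Inst Ans : Type} (L : query Inst Ans -> Prop)
  (p : list (query Inst Ans) -> list Ans -> R) : Prop :=
  forall (D : Inst) (Q1 Q2 : list (query Inst Ans)),
    bundle_in L Q1 -> bundle_in L Q2 ->
    p (Q1 ++ Q2) (eval_bundle (Q1 ++ Q2) D)
      <= p Q1 (eval_bundle Q1 D) + p Q2 (eval_bundle Q2 D).

Definition semilattice {Inst Ans : Type} (L : query Inst Ans -> Prop) (D : Inst)
  (A : Inst -> Prop) : Prop :=
  exists Q, bundle_in L Q /\ A = conflict_set Q (eval_bundle Q D).

Definition set_union {Inst : Type} (A B : Inst -> Prop) : Inst -> Prop :=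
  fun x => A x \/ B x.

Definition subadditive_over {Inst : Type} (S : (Inst -> Prop) -> Prop)
  (f : (Inst -> Prop) -> R) : Prop :=
  forall A B, S A -> S B -> f (set_union A B) <= f A + f B.

Definition countable_nonempty (Inst : Type) : Prop :=
  (exists g : nat -> Inst, forall x, exists n, g n = x) /\ inhabited Inst.

(* Conflict sets turn bundle union into set union: an instance disagrees with
   the answer of [Q1 ++ Q2] exactly when it disagrees with that of [Q1] or of
   [Q2].  Hence the prices in the no-arbitrage inequality are [f] of the sets
   in the subadditivity inequality, and the two conditions coincide. *)

From Stdlib Require Import Reals List.
From Stdlib Require Import FunctionalExtensionality PropExtensionality Classical.
Open Scope R_scope.

Lemma app_inv_length {A : Type} (l1 l2 l1' l2' : list A) :
  length l1 = length l1' -> l1 ++ l2 = l1' ++ l2' -> l1 = l1' /\ l2 = l2'.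
Proof.
  revert l1'; induction l1 as [|x l1 IH]; intros [|y l1'] Hlen Happ;
    simpl in *; try discriminate; auto.
  injection Happ as -> Happ; injection Hlen as Hlen.
  destruct (IH l1' Hlen Happ) as [-> ->]; auto.
Qed.

Lemma eval_bundle_app {Inst Ans : Type} (Q1 Q2 : list (query Inst Ans)) (D : Inst) :
  eval_bundle (Q1 ++ Q2) D = eval_bundle Q1 D ++ eval_bundle Q2 D.
Proof. apply map_app. Qed.

Lemma eval_bundle_app_inj {Inst Ans : Type} (Q1 Q2 : list (query Inst Ans))
  (D D' : Inst) :
  eval_bundle (Q1 ++ Q2) D' = eval_bundle (Q1 ++ Q2) D <->
  eval_bundle Q1 D' = eval_bundle Q1 D /\ eval_bundle Q2 D' = eval_bundle Q2 D.
Proof.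
  rewrite !eval_bundle_app; split.
  - apply app_inv_length; unfold eval_bundle; rewrite !length_map; reflexivity.
  - intros [-> ->]; reflexivity.
Qed.

Lemma conflict_set_app {Inst Ans : Type} (Q1 Q2 : list (query Inst Ans)) (D : Inst) :
  conflict_set (Q1 ++ Q2) (eval_bundle (Q1 ++ Q2) D) =
  set_union (conflict_set Q1 (eval_bundle Q1 D))
            (conflict_set Q2 (eval_bundle Q2 D)).
Proof.
  apply functional_extensionality; intro D'.
  apply propositional_extensionality.
  unfold conflict_set, set_union; rewrite eval_bundle_app_inj.
  split.
  - intro Hne; apply not_and_or; exact Hne.
  - intros [Hne | Hne] [E1 E2]; contradiction.
Qed.

Lemma semilattice_conflict_set {Inst Ans : Type} (L : query Inst Ans -> Prop)
  (Q : list (query Inst Ans)) (D : Inst) :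
  bundle_in L Q -> semilattice L D (conflict_set Q (eval_bundle Q D)).
Proof. intro HQ; exists Q; split; [exact HQ | reflexivity]. Qed.

Theorem theorem2 (Inst Ans : Type) (L : query Inst Ans -> Prop)
  (f : (Inst -> Prop) -> R)
  (HI : countable_nonempty Inst)
  (Hf : forall A, 0 <= f A) :
  no_bundle_arbitrage L (price f) <->
  (forall D : Inst, subadditive_over (semilattice L D) f).
Proof.
  split.
  - intros Hnba D A B [Q1 [HQ1 ->]] [Q2 [HQ2 ->]].
    rewrite <- conflict_set_app; exact (Hnba D Q1 Q2 HQ1 HQ2).
  - intros Hsub D Q1 Q2 HQ1 HQ2; unfold price; rewrite conflict_set_app.
    apply (Hsub D); apply semilattice_conflict_set; assumption.
Qed.
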